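(* Let $h>0$ and let $f\in H^\omega(X)\cap L_{\mathrm{loc}}(X)$. Then \[ \|f-S_hf\|_{\mathcal{B}(X)}\le\frac{\|f\|_{H^\omega(X)}}{\mu(B_h)}\int_{B_h}\omega(\rho(u,\theta))\,d\mu(u). \] The inequality is sharp: for every $c\in\mathbb R$ the functions $f_\omega(x)=c\pm\omega(\rho(x,\theta))$ belong to $H^\omega(X)$, satisfy $\|f_\omega\|_{H^\omega(X)}=1$, and turn the inequality into an equality.
   Context: Standing setting: $(X,\rho)$ is a metric space with a Borel measure $\mu$. $X$ is a commutative monoid, i.e. there is an associative and commutative binary operation $+$ on $X$ with a neutral element $\theta$ ($x+\theta=x$ for all $x$). The measure is translation invariant: $\mu(x+Q)=\mu(Q)$ for every $\mu$-measurable $Q\subset X$ and every $x\in X$; correspondingly $\int_{B_h}g(x+u)\,d\mu(u)=\int_{x+B_h}g(u)\,d\mu(u)$ for locally integrable $g$. Moreover $\rho(x+y,x)\le\rho(y,\theta)$ for all $x,y\in X$. $B_h$ denotes the open ball of radius $h$ centered at $\theta$, and it is assumed that $0<\mu(B_h)<\infty$ and $B_h\neq\{\theta\}$ for every $h>0$. Every continuous real function on $X$ is integrable on every open ball. $L_{\mathrm{loc}}(X)$ is the space of functions $f\colon X\to\mathbb R$ integrable on every open ball. For a bounded function $f$, $\|f\|_{\mathcal B(X)}=\sup_{x\in X}|f(x)|$. A modulus of continuity is a function $\omega\colon[0,\infty)\to[0,\infty)$ that is non-decreasing, semi-additive ($\omega(s+t)\le\omega(s)+\omega(t)$), with $\omega(0)=0$,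 and not identically zero (so $\omega(t)>0$ for $t>0$). $H^\omega(X)$ is the space of $f\colon X\to\mathbb R$ with $\|f\|_{H^\omega(X)}:=\sup_{x\neq y}\frac{|f(x)-f(y)|}{\omega(\rho(x,y))}<\infty$. For $h>0$ and $f\in L_{\mathrm{loc}}(X)$, $S_hf(x)=\frac{1}{\mu(B_h)}\int_{B_h}f(x+u)\,d\mu(u)$. *)

From HB Require Import structures.
From mathcomp Require Import all_boot all_order all_algebra.
From mathcomp Require Import all_classical all_reals all_analysis.
Set Implicit Arguments. Unset Strict Implicit. Unset Printing Implicit Defensive.
Import Order.TTheory GRing.Theory Num.Theory.
Import numFieldNormedType.Exports.
Local Open Scope classical_set_scope.
Local Open Scope ring_scope.

Section Defs.
Variables (R : realType) (X : Type).
Variable rho : X -> X -> R.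

Definition rball (x : X) (r : R) : set X := [set y | rho x y < r].

Definition ropen (A : set X) : Prop :=
  forall x, A x -> exists2 r : R, 0 < r & rball x r `<=` A.

Definition rcontinuous (g : X -> R) : Prop :=
  forall x (e : R), 0 < e -> exists2 del : R, 0 < del &
    forall y, rho x y < del -> `|g y - g x| < e.

Definition is_metric : Prop :=
  [/\ forall x y, 0 <= rho x y,
      forall x y, rho x y = 0 <-> x = y,
      forall x y, rho x y = rho y x &
      forall x y z, rho x z <= rho x y + rho y z].

Definition modulus (omega : R -> R) : Prop :=
  [/\ forall t, 0 <= t -> 0 <= omega t,
      forall s t, 0 <= s -> s <= t -> omega s <= omega t,
      forall s t, 0 <= s -> 0 <= t -> omega (s + t) <= omega s + omega t,
      omega 0 = 0 &
      exists2 t, 0 <= t & omega t <> 0].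

Definition Hnorm_e (omega : R -> R) (f : X -> R) : \bar R :=
  ereal_sup [set z | exists x y, x <> y /\
                     z = ((`|f x - f y| / omega (rho x y))%:E)].
Definition in_Homega (omega : R -> R) (f : X -> R) : Prop :=
  (Hnorm_e omega f < +oo)%E.
Definition Hnorm (omega : R -> R) (f : X -> R) : R := fine (Hnorm_e omega f).

End Defs.

(* sup norm ||g||_{B(X)}, valued in extended reals (+oo if unbounded) *)
Definition Bnorm_e (R : realType) (X : Type) (g : X -> R) : \bar R :=
  ereal_sup [set (`|g x|)%:E | x in [set: X]].

Section MeasDefs.
Variables (R : realType) (d : measure_display) (X : measurableType d).
Variables (rho : X -> X -> R) (plus : X -> X -> X) (theta : X).
Variable (mu : {measure set X -> \bar R}).

Definition Bh (h : R) : set X := rball rho theta h.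

Definition Lloc (f : X -> R) : Prop :=
  forall x (r : R), 0 < r -> mu.-integrable (rball rho x r) (EFin \o f).

Definition Sh (h : R) (f : X -> R) (x : X) : R :=
  (fine (mu (Bh h)))^-1 * Rintegral mu (Bh h) (fun u => f (plus x u)).

Definition standing_setting : Prop :=
  is_metric rho /\
  [/\ (* mu is a Borel measure: measurable sets = Borel sets of rho *)
      @measurable d X = <<s ropen rho >>,
      [/\ forall x y z, plus x (plus y z) = plus (plus x y) z,
          forall x y, plus x y = plus y x &
          forall x, plus x theta = x],
      forall (Q : set X) x, measurable Q ->
        measurable (plus x @` Q) /\ mu (plus x @` Q) = mu Q,
      forall (g : X -> R) x (h : R), 0 < h -> Lloc g ->
        (\int[mu]_(u in Bh h) (g (plus x u))%:E =
         \int[mu]_(u in plus x @` Bh h) (g u)%:E)%E &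
      [/\ forall x y, rho (plus x y) x <= rho y theta,
          forall h : R, 0 < h -> (0 < mu (Bh h) < +oo)%E /\ Bh h <> [set theta] &
          forall g : X -> R, rcontinuous rho g ->
            forall x (r : R), 0 < r -> mu.-integrable (rball rho x r) (EFin \o g)]].

End MeasDefs.

From HB Require Import structures.
From mathcomp Require Import all_boot all_order all_algebra.
From mathcomp Require Import all_classical all_reals all_analysis.
From mathcomp Require Import measurable_realfun.
Import Order.TTheory GRing.Theory Num.Theory.
Local Open Scope classical_set_scope.
Local Open Scope ring_scope.
Set Implicit Arguments. Unset Strict Implicit. Unset Printing Implicit Defensive.

(* Translation invariance turns f x - S_h f x into the mean over
   x + B_h of f x - f u; moving the absolute value inside and translating back
   gives |f x - S_h f x| <= mu(B_h)^-1 int_{B_h} |f x - f (x + u)| du, and the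
   Hoelder estimate |f x - f (x + u)| <= ||f||_{H^omega} omega (rho u theta)
   (since rho (x + u) x <= rho u theta) bounds the integrand.  For |sgn| = 1 the functions c + sgn omega (rho x theta) have
   H^omega seminorm 1 (x |-> omega (rho x theta) is omega-Lipschitz, with
   equality at pairs (u, theta)) and at x = theta the estimate is an equality. *)

Section MetricModulus.
Variables (R : realType) (X : Type) (rho : X -> X -> R) (omega : R -> R).
Hypothesis met : is_metric rho.
Hypothesis mod_omega : modulus omega.

Lemma rho_gt0 x y : x <> y -> 0 < rho x y.
Proof.
case: met => rho_ge0 rho_eq0 _ _ xy.
by rewrite lt_neqAle rho_ge0 andbT eq_sym; apply/eqP => /rho_eq0.
Qed.

(* A modulus of continuity vanishes only at 0: semi-additivity gives
   omega (n t) <= n omega t, and some multiple of t exceeds a point where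
   omega is non-zero. *)
Lemma modulus_gt0 t : 0 < t -> 0 < omega t.
Proof.
case: mod_omega => om_ge0 om_mono om_subadd om0 [t0 t0_ge0 om_t0] t_gt0.
have om_mulrn n : omega (t *+ n) <= omega t *+ n.
  elim: n => [|n IH]; first by rewrite !mulr0n om0.
  rewrite !mulrS; apply: le_trans (om_subadd _ _ (ltW t_gt0) _) _.
    exact: mulrn_wge0 (ltW t_gt0).
  by rewrite lerD2l.
have om_t0_gt0 : 0 < omega t0.
  by rewrite lt_neqAle om_ge0 // andbT eq_sym; apply/eqP.
have t0_le : t0 <= t *+ Num.bound (t0 / t).
  rewrite -mulr_natr -ler_pdivrMl // mulrC ltW //.
  by apply: archi_boundP; rewrite divr_ge0 // ltW.
have := lt_le_trans om_t0_gt0 (le_trans (om_mono _ _ t0_ge0 t0_le) (om_mulrn _)).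
have [->|om_t_neq0 _] := eqVneq (omega t) 0; first by rewrite mul0rn ltxx.
by rewrite lt_neqAle eq_sym om_t_neq0 om_ge0 // ltW.
Qed.

Lemma modulus_rho_eq0 x : omega (rho x x) = 0.
Proof.
case: met => _ rho_eq0 _ _; case: mod_omega => _ _ _ om0 _.
by rewrite (proj2 (rho_eq0 x x)).
Qed.

Lemma Homega_le f x y : in_Homega rho omega f ->
  `|f x - f y| <= Hnorm rho omega f * omega (rho x y).
Proof.
move=> f_fin; have [<-|xy] := pselect (x = y).
  by rewrite subrr normr0 modulus_rho_eq0 mulr0.
have om_gt0 := modulus_gt0 (rho_gt0 xy).
have ratio_le : ((`|f x - f y| / omega (rho x y))%:E <= Hnorm_e rho omega f)%E.
  by apply: ereal_sup_ubound; exists x, y.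
have Hfin : Hnorm_e rho omega f \is a fin_num.
  rewrite fin_numE (lt_eqF f_fin) andbT; apply: contraTneq ratio_le => ->.
  by rewrite leeNy_eq.
by move: ratio_le; rewrite -(fineK Hfin) lee_fin ler_pdivrMr.
Qed.

(* The H^omega seminorm of a function in H^omega is non-negative
   (when X has no two distinct points the defining supremum is empty). *)
Lemma Hnorm_ge0 f : in_Homega rho omega f -> 0 <= Hnorm rho omega f.
Proof.
move=> f_fin; have [[x [y xy]]|single] := pselect (exists x y : X, x <> y).
  have om_gt0 := modulus_gt0 (rho_gt0 xy).
  rewrite -(pmulr_lge0 _ om_gt0); exact: le_trans (Homega_le _ _ f_fin).
rewrite /Hnorm /Hnorm_e.
have -> : [set z | exists x y, x <> y /\
    z = ((`|f x - f y| / omega (rho x y))%:E)] = set0.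
  by apply/seteqP; split => // z [x [y [xy _]]]; apply: single; exists x, y.
by rewrite ereal_sup0.
Qed.

Lemma modulus_rho_lipschitz x y z :
  `|omega (rho x z) - omega (rho y z)| <= omega (rho x y).
Proof.
case: met => rho_ge0 _ rho_sym rho_tri.
case: mod_omega => _ om_mono om_subadd _ _.
have om_tri a b : omega (rho a z) <= omega (rho a b) + omega (rho b z).
  apply: le_trans (om_subadd _ _ (rho_ge0 _ _) (rho_ge0 _ _)).
  exact: om_mono (rho_tri _ _ _).
rewrite ler_norml lerBlDr lerNl opprB lerBlDr om_tri andbT (rho_sym x y).
exact: om_tri.
Qed.

Definition extremal (c sgn : R) (z : X) (x : X) : R := c + sgn * omega (rho x z).

(* For |sgn| = 1 the extremal functions have H^omega seminorm exactly 1, the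
   supremum being attained at any pair (u, z) with u <> z. *)
Lemma Hnorm_e_extremal c sgn z u : `|sgn| = 1 -> u <> z ->
  Hnorm_e rho omega (extremal c sgn z) = 1%:E.
Proof.
move=> sgn1 uz.
have ext_diff x y : `|extremal c sgn z x - extremal c sgn z y| =
    `|omega (rho x z) - omega (rho y z)|.
  by rewrite /extremal opprD addrACA subrr add0r -mulrBr normrM sgn1 mul1r.
apply/eqP; rewrite eq_le; apply/andP; split.
  apply: ge_ereal_sup => _ [x [y [xy ->]]].
  rewrite lee_fin ler_pdivrMr ?mul1r ?modulus_gt0 ?rho_gt0 // ext_diff.
  exact: modulus_rho_lipschitz.
apply: ereal_sup_ubound; exists u, z; split => //.
rewrite ext_diff modulus_rho_eq0 subr0 ger0_norm ?divff //.
  by rewrite gt_eqF // modulus_gt0 // rho_gt0.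
by rewrite ltW // modulus_gt0 // rho_gt0.
Qed.

End MetricModulus.

(* Monotonicity of the integral of non-negative functions, without any
   measurability assumption: both integrals are suprema of integrals of
   simple functions below the integrand. *)
Lemma ge0_le_integral_nomeas d (T : measurableType d) (R : realType)
    (mu : {measure set T -> \bar R}) (D : set T) (f g : T -> \bar R) :
  (forall x, D x -> (0 <= f x)%E) -> (forall x, D x -> (f x <= g x)%E) ->
  (\int[mu]_(x in D) f x <= \int[mu]_(x in D) g x)%E.
Proof.
move=> f_ge0 fg.
have g_ge0 x : D x -> (0 <= g x)%E by move=> Dx; exact: le_trans (f_ge0 x Dx) (fg x Dx).
rewrite (ge0_integralE _ f_ge0) (ge0_integralE _ g_ge0).
apply: ereal_sup_le => _ [s /= s_le <-]; exists s => //= x.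
apply: le_trans (s_le x) _; rewrite /patch; case: ifP => // /set_mem Dx.
exact: fg.
Qed.

Section StandingSetting.
Variables (R : realType) (d : measure_display) (X : measurableType d).
Variables (rho : X -> X -> R) (plus : X -> X -> X) (theta : X).
Variable mu : {measure set X -> \bar R}.
Hypothesis setting : standing_setting rho plus theta mu.

Local Notation Lloc := (Lloc rho mu).
Local Notation Bh := (Bh rho theta).

Let met : is_metric rho. Proof. by case: setting. Qed.

(* Open balls are open, hence Borel. *)
Lemma measurable_rball x r : measurable (rball rho x r).
Proof.
case: setting => _ [-> _ _ _ _]; apply: sub_sigma_algebra => y /= xy.
case: met => _ _ _ rho_tri.
exists (r - rho x y); first by rewrite subr_gt0.
by move=> w /= yw; apply: le_lt_trans (rho_tri x y w) _; rewrite -ltrBrDl.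
Qed.

(* The distance to a point is a Borel function, since its superlevel sets
   are open. *)
Lemma measurable_rho z : measurable_fun setT (fun u => rho u z).
Proof.
case: setting => _ [mE _ _ _ _].
apply: (measurability _ (RGenOInfty.measurableE R)) => //.
move=> /= _ [_ [a ->] <-]; rewrite setTI mE; apply: sub_sigma_algebra.
move=> y /=; rewrite in_itv /= andbT => ay; case: met => _ _ _ rho_tri.
exists (rho y z - a); first by rewrite subr_gt0.
move=> w /= yw; rewrite in_itv /= andbT.
have := rho_tri y w z; rewrite -lerBlDl; apply: lt_le_trans.
by rewrite ltrBrDl addrC -ltrBrDl.
Qed.

(* Continuous functions, in particular constants, are locally integrable. *)
Lemma Lloc_cst (k : R) : Lloc (fun _ => k).
Proof.
case: setting => _ [_ _ _ _ [_ _ cont_int]] x r r_gt0; apply: cont_int => //.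
by move=> y e e_gt0; exists 1 => // z _; rewrite subrr normr0.
Qed.

Lemma LlocD f g : Lloc f -> Lloc g -> Lloc (fun u => f u + g u).
Proof.
move=> Lf Lg x r r_gt0; have mB := measurable_rball x r.
apply: (eq_integrable mB _ _ _ (integrableD mB (Lf x r r_gt0) (Lg x r r_gt0))).
by move=> u _ /=; rewrite EFinD.
Qed.

Lemma LlocZ (k : R) f : Lloc f -> Lloc (fun u => k * f u).
Proof.
move=> Lf x r r_gt0; have mB := measurable_rball x r.
apply: (eq_integrable mB _ _ _ (integrableZl mB k (Lf x r r_gt0))).
by move=> u _ /=; rewrite EFinM.
Qed.

Lemma LlocB f g : Lloc f -> Lloc g -> Lloc (fun u => f u - g u).
Proof.
move=> Lf Lg x r r_gt0; have mB := measurable_rball x r.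
apply: (eq_integrable mB _ _ _ (integrableB mB (Lf x r r_gt0) (Lg x r r_gt0))).
by move=> u _ /=; rewrite EFinB.
Qed.

Lemma Lloc_norm f : Lloc f -> Lloc (fun u => `|f u|).
Proof. by move=> Lf x r r_gt0; apply: integrable_norm (Lf x r r_gt0). Qed.

Lemma fine_mu_Bh_gt0 h : 0 < h -> 0 < fine (mu (Bh h)).
Proof.
case: setting => _ [_ _ _ _ [_ Bh_meas _]] /Bh_meas[/andP[mu_gt0 mu_fin] _].
by rewrite -lte_fin fineK // ge0_fin_numE // ltW.
Qed.

(* Since rho (x + u) x <= rho u theta, the translate x + B_h lies in the
   ball of radius h around x. *)
Lemma translate_Bh_sub x h : plus x @` Bh h `<=` rball rho x h.
Proof.
case: setting => _ [_ _ _ _ [rho_plus _ _]]; case: met => _ _ rho_sym _.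
move=> _ [u Bu <-]; rewrite /rball /= rho_sym.
by apply: le_lt_trans (rho_plus x u) _; rewrite rho_sym.
Qed.

Lemma measurable_translate_Bh x h : measurable (plus x @` Bh h).
Proof.
case: setting => _ [_ _ translate _ _].
exact: (translate _ x (measurable_rball theta h)).1.
Qed.

Lemma mu_translate_Bh x h : mu (plus x @` Bh h) = mu (Bh h).
Proof.
case: setting => _ [_ _ translate _ _].
exact: (translate _ x (measurable_rball theta h)).2.
Qed.

Lemma integrable_translate_Bh f x h : 0 < h -> Lloc f ->
  mu.-integrable (plus x @` Bh h) (EFin \o f).
Proof.
move=> h_gt0 Lf; apply: integrableS (Lf x h h_gt0) => //.
- exact: measurable_rball.
- exact: measurable_translate_Bh.
- exact: translate_Bh_sub.
Qed.

Lemma Rintegral_translate f x h : 0 < h -> Lloc f ->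
  \int[mu]_(u in Bh h) f (plus x u) = \int[mu]_(u in plus x @` Bh h) f u.
Proof.
case: setting => _ [_ _ _ translate _] h_gt0 Lf.
by rewrite /Rintegral translate.
Qed.

Lemma Sh_deviationE f x h : 0 < h -> Lloc f ->
  f x - Sh rho plus theta mu h f x =
  (fine (mu (Bh h)))^-1 * \int[mu]_(u in plus x @` Bh h) (f x - f u).
Proof.
move=> h_gt0 Lf; have m_gt0 := fine_mu_Bh_gt0 h_gt0.
have mA := measurable_translate_Bh x h.
rewrite /Sh Rintegral_translate // RintegralB //; last 2 first.
- exact: integrable_translate_Bh (Lloc_cst (f x)).
- exact: integrable_translate_Bh.
rewrite Rintegral_cst // mu_translate_Bh mulrBr [_^-1 * (_ * _)]mulrC.
by rewrite mulfK // gt_eqF.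
Qed.

(* X has a point other than theta, since B_h <> [set theta]. *)
Lemma exists_neq_theta : exists u : X, u <> theta.
Proof.
case: setting => _ [_ _ _ _ [_ /(_ 1 ltr01)[_ Bh_neq] _]].
apply: contrapT => single; apply: Bh_neq; apply/seteqP; split => [u _|_ ->] /=.
  by apply: contrapT => u_neq; apply: single; exists u.
by case: met => _ rho_eq0 _ _; rewrite /Bh /rball /= (proj2 (rho_eq0 _ _)).
Qed.

Section Modulus.
Variable omega : R -> R.
Hypothesis mod_omega : modulus omega.

(* omega (rho u z) is Borel in u: omega is non-decreasing on [0, +oo). *)
Lemma measurable_modulus_rho z : measurable_fun setT (fun u => omega (rho u z)).
Proof.
case: mod_omega => _ om_mono _ _ _; case: met => rho_ge0 _ _ _.
have -> : (fun u => omega (rho u z)) =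
    (fun t => omega (Num.max t 0)) \o (fun u => rho u z).
  by apply/funext => u /=; rewrite max_l.
apply: measurableT_comp (measurable_rho z).
apply: nondecreasing_measurable => // s t st.
apply: om_mono; first by rewrite le_max lexx orbT.
by rewrite ge_max !le_max st lexx !orbT.
Qed.

(* omega (rho u z) is locally integrable: on rball x r it is bounded by the
   constant omega (r + rho x z). *)
Lemma Lloc_modulus_rho z : Lloc (fun u => omega (rho u z)).
Proof.
move=> x r r_gt0; case: met => rho_ge0 _ rho_sym rho_tri.
case: mod_omega => om_ge0 om_mono _ _ _.
apply: (le_integrable (measurable_rball x r) _ _
  (Lloc_cst (omega (r + rho x z)) x r_gt0)).
  by apply/measurable_EFinP; apply: measurable_funS (measurable_modulus_rho z).
move=> u /= xu; have r_z_ge0 : 0 <= r + rho x z by rewrite addr_ge0 // ltW.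
rewrite !lee_fin !ger0_norm ?om_ge0 //.
apply: om_mono => //; apply: le_trans (rho_tri u x z) _.
by rewrite lerD2r rho_sym ltW.
Qed.

(* omega (rho u theta) has a finite integral over B_h. *)
Lemma integral_modulus_BhE h : 0 < h ->
  (\int[mu]_(u in Bh h) (omega (rho u theta))%:E)%E =
  (\int[mu]_(u in Bh h) omega (rho u theta))%:E.
Proof.
move=> h_gt0; rewrite /Rintegral fineK //.
exact: integrable_fin_num (measurable_rball _ _) _ (Lloc_modulus_rho theta theta h_gt0).
Qed.

(* Averaging the Hoelder estimate over the ball:
   int_{B_h} |f x - f (x + u)| <= ||f||_{H^omega} int_{B_h} omega (rho u theta). *)
Lemma integral_deviation_le f x h : 0 < h ->
  in_Homega rho omega f -> Lloc f ->
  \int[mu]_(u in Bh h) `|f x - f (plus x u)| <=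
  Hnorm rho omega f * \int[mu]_(u in Bh h) omega (rho u theta).
Proof.
move=> h_gt0 f_fin Lf.
case: setting => _ [_ _ _ translate [rho_plus _ _]].
case: mod_omega => _ om_mono _ _ _; case: met => rho_ge0 _ _ _.
have Ldev : Lloc (fun u => `|f x - f u|) by apply/Lloc_norm/LlocB/Lf/Lloc_cst.
have om_int := Lloc_modulus_rho theta theta h_gt0.
rewrite -RintegralZl //; last exact: measurable_rball.
apply: fine_le.
- rewrite (translate (fun u => `|f x - f u|)) //.
  apply: integrable_fin_num (measurable_translate_Bh x h) _ _.
  exact: integrable_translate_Bh.
- apply: integrable_fin_num (measurable_rball _ _) _ _.
  exact: (integrableZl (measurable_rball _ _) _ om_int).
apply: ge0_le_integral_nomeas => u Bu; first by rewrite lee_fin.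
rewrite lee_fin distrC; apply: le_trans (Homega_le met mod_omega _ _ f_fin) _.
apply: ler_wpM2l; first exact: Hnorm_ge0 f_fin.
exact: om_mono (rho_ge0 _ _) (rho_plus x u).
Qed.

Lemma Sh_deviation_le f x h : 0 < h -> in_Homega rho omega f -> Lloc f ->
  `|f x - Sh rho plus theta mu h f x| <=
  Hnorm rho omega f / fine (mu (Bh h)) * \int[mu]_(u in Bh h) omega (rho u theta).
Proof.
move=> h_gt0 f_fin Lf; have m_gt0 := fine_mu_Bh_gt0 h_gt0.
have mA := measurable_translate_Bh x h.
have Ldiff : Lloc (fun u => f x - f u) by apply/LlocB/Lf/Lloc_cst.
have minv_ge0 : 0 <= (fine (mu (Bh h)))^-1 by rewrite invr_ge0 ltW.
rewrite Sh_deviationE // normrM (ger0_norm minv_ge0).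
rewrite [in X in _ <= X]mulrAC [in X in _ <= X]mulrC.
apply: (ler_wpM2l minv_ge0).
apply: le_trans (le_normr_Rintegral mA (integrable_translate_Bh x h_gt0 Ldiff)) _.
rewrite -(Rintegral_translate x h_gt0 (Lloc_norm Ldiff)).
exact: integral_deviation_le.
Qed.

Lemma Lloc_extremal c sgn z : Lloc (extremal rho omega c sgn z).
Proof. exact: LlocD (Lloc_cst c) (LlocZ sgn (Lloc_modulus_rho z)). Qed.

(* At the centre theta the extremal function attains the bound exactly:
   it equals c there, while its mean over B_h is c + sgn times the mean of
   omega (rho u theta). *)
Lemma Sh_extremal_center c sgn h : 0 < h -> `|sgn| = 1 ->
  `|extremal rho omega c sgn theta theta -
    Sh rho plus theta mu h (extremal rho omega c sgn theta) theta| =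
  (fine (mu (Bh h)))^-1 * \int[mu]_(u in Bh h) omega (rho u theta).
Proof.
move=> h_gt0 sgn1; have m_gt0 := fine_mu_Bh_gt0 h_gt0.
have minv_ge0 : 0 <= (fine (mu (Bh h)))^-1 by rewrite invr_ge0 ltW.
have mB := measurable_rball theta h.
have int_ge0 : 0 <= \int[mu]_(u in Bh h) omega (rho u theta).
  apply: Rintegral_ge0 => u _; case: mod_omega => om_ge0 _ _ _ _.
  by apply: om_ge0; case: met.
have mean_extremal : \int[mu]_(u in Bh h) extremal rho omega c sgn theta (plus theta u) =
    c * fine (mu (Bh h)) + sgn * \int[mu]_(u in Bh h) omega (rho u theta).
  rewrite (@eq_Rintegral _ _ _ mu _ (fun u => c + sgn * omega (rho u theta))).
    rewrite RintegralD // ?Rintegral_cst ?RintegralZl //.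
    - exact (Lloc_modulus_rho theta theta h_gt0).
    - exact (Lloc_cst c theta h_gt0).
    - exact (LlocZ sgn (Lloc_modulus_rho theta) theta h_gt0).
  by case: setting => _ [_ [_ plusC plus0] _ _ _] u _; rewrite /extremal plusC plus0.
rewrite /Sh mean_extremal {1}/extremal modulus_rho_eq0 // mulr0 addr0.
rewrite mulrDr mulrCA mulVf ?gt_eqF // mulr1 opprD addrA subrr add0r normrN.
by rewrite normrM (ger0_norm minv_ge0) normrM sgn1 mul1r (ger0_norm int_ge0).
Qed.

End Modulus.
End StandingSetting.

Theorem lemma1 (R : realType) (d : measure_display) (X : measurableType d)
  (rho : X -> X -> R) (plus : X -> X -> X) (theta : X)
  (mu : {measure set X -> \bar R}) (omega : R -> R) :
  standing_setting rho plus theta mu -> modulus omega ->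
  forall h : R, 0 < h ->
  (forall f : X -> R, in_Homega rho omega f -> Lloc rho mu f ->
     (Bnorm_e (fun x => (f x - Sh rho plus theta mu h f x)%R) <=
      (Hnorm rho omega f / fine (mu (Bh rho theta h)))%:E *
        \int[mu]_(u in Bh rho theta h) (omega (rho u theta))%:E)%E) /\
  (forall (c sgn : R), sgn = 1 \/ sgn = -1 ->
     let fw := fun x => c + sgn * omega (rho x theta) in
     [/\ in_Homega rho omega fw,
         Hnorm rho omega fw = 1 &
         Bnorm_e (fun x => fw x - Sh rho plus theta mu h fw x) =
           ((Hnorm rho omega fw / fine (mu (Bh rho theta h)))%:E *
             \int[mu]_(u in Bh rho theta h) (omega (rho u theta))%:E)%E]).
Proof.
move=> setting mod_omega h h_gt0.
have met : is_metric rho by case: setting.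
rewrite (integral_modulus_BhE setting mod_omega h_gt0).
split=> [f f_fin Lf|c sgn sgn_pm1 fw].
  rewrite -EFinM; apply: ge_ereal_sup => _ [x _ <-].
  by rewrite lee_fin Sh_deviation_le.
have sgn1 : `|sgn| = 1 by case: sgn_pm1 => ->; rewrite ?normrN normr1.
have [u0 u0_neq] := exists_neq_theta setting.
have Hnorm_e1 : Hnorm_e rho omega fw = 1%:E.
  exact (Hnorm_e_extremal met mod_omega c sgn1 u0_neq).
have fw_fin : in_Homega rho omega fw by rewrite /in_Homega Hnorm_e1 ltry.
have Hnorm1 : Hnorm rho omega fw = 1 by rewrite /Hnorm Hnorm_e1.
split => //; rewrite Hnorm1 -EFinM mul1r; apply/eqP; rewrite eq_le; apply/andP; split.
- apply: ge_ereal_sup => _ [x _ <-]; rewrite lee_fin.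
  have := Sh_deviation_le setting mod_omega x h_gt0 fw_fin
    (Lloc_extremal setting mod_omega c sgn theta).
  by rewrite Hnorm1 mul1r.
- apply: ereal_sup_ubound; exists theta => //.
  by rewrite (Sh_extremal_center setting mod_omega c h_gt0 sgn1).
Qed.
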